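(* Let $X$ and $Y$ be non-negative absolutely continuous random variables with $X\le_{disp}Y$. Then (A) $R^\alpha_\beta(X)\le R^\alpha_\beta(Y)$ if $\{\alpha<1,\ \beta\ge1\}$ or $\{\alpha>1,\ \beta\ge 1\}$; (B) $R^\alpha_\beta(X)\ge R^\alpha_\beta(Y)$ if $\{\alpha<1,\ \beta<1\}$ or $\{\alpha>1,\ \beta<1\}$, where $0<\alpha$, $\alpha\ne1$, $\beta>0$.
   Context: For a non-negative absolutely continuous random variable $X$ with PDF $f$, the Rényi information generating function is $R^\alpha_\beta(X)=\frac{1}{1-\alpha}\left(\int_0^\infty f^\alpha(x)\,dx\right)^{\beta-1}$ for $0<\alpha<\infty$, $\alpha\ne1$, $\beta>0$; all integrals are assumed finite. If $X,Y$ have PDFs $f,g$ and CDFs $F,G$, then $X$ is smaller than $Y$ in the dispersive order, $X\le_{disp}Y$, if $g(G^{-1}(u))\le f(F^{-1}(u))$ for all $u\in(0,1)$, where $F^{-1}(u)=\inf\{x:F(x)\ge u\}$. *)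

From HB Require Import structures.
From mathcomp Require Import all_boot all_order all_algebra.
From mathcomp Require Import all_classical all_reals all_analysis.
Set Implicit Arguments. Unset Strict Implicit. Unset Printing Implicit Defensive.
Import Order.TTheory GRing.Theory Num.Theory.
Import numFieldNormedType.Exports.
Local Open Scope classical_set_scope.
Local Open Scope ring_scope.

Definition is_pdf d (T : measurableType d) (R : realType) (P : probability T R)
  (X : {RV P >-> R}) (f : R -> R) : Prop :=
  [/\ measurable_fun setT f, (forall x, 0 <= f x) &
      forall A : set R, measurable A ->
        distribution P X A = (\int[lebesgue_measure]_(x in A) (f x)%:E)%E].

Definition cdfR d (T : measurableType d) (R : realType) (P : probability T R)
  (X : {RV P >-> R}) (x : R) : R := fine (cdf X x).

Definition qinv (R : realType) (F : R -> R) (u : R) : R := inf [set x | u <= F x].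

Definition disp_le d (T : measurableType d) (R : realType) (P : probability T R)
  (X Y : {RV P >-> R}) (f g : R -> R) : Prop :=
  forall u : R, 0 < u < 1 ->
    g (qinv (cdfR Y) u) <= f (qinv (cdfR X) u).

Definition int_pow (R : realType) (f : R -> R) (a : R) : \bar R :=
  (\int[lebesgue_measure]_(x in `[0%R, +oo[%classic) ((f x) `^ a)%R%:E)%E.

Definition renyi_igf (R : realType) (f : R -> R) (a b : R) : R :=
  (1 - a)^-1 * (fine (int_pow f a)) `^ (b - 1).

From HB Require Import structures.
From mathcomp Require Import all_boot all_order all_algebra.
From mathcomp Require Import all_classical all_reals all_analysis.
From mathcomp Require Import measurable_realfun.
Set Implicit Arguments. Unset Strict Implicit. Unset Printing Implicit Defensive.
Import Order.TTheory GRing.Theory Num.Theory.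
Import numFieldNormedType.Exports.
Local Open Scope classical_set_scope.
Local Open Scope ring_scope.

(* The law of X is the image of the Lebesgue measure on ]0,1[ under the
   quantile function F^-1 (both measures have distribution function F).
   Since f^a = f^(a-1) f, this gives

     int_0^oo f^a = E[f(X)^(a-1)] = int_0^1 f(F^-1 u)^(a-1) du.

   The dispersive order compares these integrands pointwise,
   g(G^-1 u) <= f(F^-1 u).  For a > 1 this yields int g^a <= int f^a.
   For a < 1 the exponent a - 1 is negative and the inequality reverses
   wherever g(G^-1 u) > 0, i.e. for almost every u, because Y puts no mass
   where g vanishes.  Both integrals are positive and finite, and the sign
   of 1/(1-a) together with the monotonicity of t |-> t^(b-1) gives the
   four cases. *)

Section integral_weighted_image.
Local Open Scope ereal_scope.
Context d d' (T : measurableType d) (T' : measurableType d') (R : realType).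
Variables (m : {measure set T -> \bar R}) (D : set T).
Variables (phi : T -> T') (w : T -> R).
Hypotheses (mD : measurable D) (mphi : measurable_fun D phi)
  (mw : measurable_fun D w) (w_ge0 : forall x, (0 <= w x)%R).
Variable nu : {measure set T' -> \bar R}.
Hypothesis nuE : forall A, measurable A ->
  nu A = \int[m]_(x in D) (\1_A (phi x) * w x)%:E.

Import HBNNSimple.

Let measurable_indic_comp (A : set T') : measurable A ->
  measurable_fun D (fun x => \1_A (phi x) : R).
Proof. by move=> mA; apply: measurableT_comp => //; exact: measurable_indic. Qed.

Let integral_nnsfun_image (s : {nnsfun T' >-> R}) :
  \int[nu]_y (s y)%:E = \int[m]_(x in D) (s (phi x) * w x)%:E.
Proof.
transitivity (\sum_(r \in range s) r%:E * nu (s @^-1` [set r])).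
  under eq_integral do rewrite fimfunE -fsumEFin//.
  rewrite ge0_integral_fsum//; last 2 first.
  - move=> r; apply/measurable_EFinP/measurable_funM => //;
    exact: measurable_indic.
  - by move=> r y _; rewrite nnfun_muleindic_ge0.
  apply: eq_fsbigr => r _.
  by rewrite integralZl_indic_nnsfun// integral_indic// setIT.
under [RHS]eq_integral do rewrite fimfunE mulr_fsuml -fsumEFin//.
rewrite ge0_integral_fsum//; last 2 first.
- move=> r; apply/measurable_EFinP/measurable_funM => //.
  by apply: measurable_funM => //; exact: measurable_indic_comp.
- by move=> r x _; rewrite lee_fin mulr_ge0// -lee_fin nnfun_muleindic_ge0.
apply: eq_fsbigr => r /[!inE] -[y _ <-]; rewrite nuE//.
rewrite -ge0_integralZl//; last 3 first.
- by apply/measurable_EFinP/measurable_funM => //; exact: measurable_indic_comp.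
- by move=> x _; rewrite lee_fin mulr_ge0.
- by rewrite lee_fin.
by apply: eq_integral => x _; rewrite -EFinM mulrA.
Qed.

Lemma ge0_integral_weighted_image (h : T' -> \bar R) :
  (forall y, 0 <= h y) -> measurable_fun setT h ->
  \int[nu]_y h y = \int[m]_(x in D) (h (phi x) * (w x)%:E).
Proof.
move=> h_ge0 mh; pose s := nnsfun_approx measurableT mh.
have s_nd y : {homo (fun n => (s n y)%:E) : n k / (n <= k)%N >-> n <= k}.
  by move=> n k nk; rewrite lee_fin; exact/lefP/nd_nnsfun_approx.
transitivity (lim (\int[nu]_y (s n y)%:E @[n --> \oo])).
  rewrite -monotone_convergence//.
  - apply: eq_integral => y _; apply/esym/cvg_lim => //.
    exact: cvg_nnsfun_approx.
  - by move=> n; exact/measurable_EFinP/measurable_funTS.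
  - by move=> n y _; rewrite lee_fin.
transitivity (lim (\int[m]_(x in D) (s n (phi x) * w x)%:E @[n --> \oo])).
  by under eq_fun do rewrite integral_nnsfun_image.
rewrite -monotone_convergence//.
- apply: eq_integral => x _; apply/cvg_lim => //.
  under eq_fun do rewrite EFinM.
  by apply: cvgeZr => //; exact: cvg_nnsfun_approx.
- move=> n; apply/measurable_EFinP/measurable_funM => //.
  exact: measurableT_comp.
- by move=> n x _; rewrite lee_fin mulr_ge0.
- move=> x _ n k nk; rewrite !EFinM lee_wpmul2r ?lee_fin//.
  exact: s_nd.
Qed.

End integral_weighted_image.

Lemma le0_ger_powR (R : realType) (e x y : R) :
  e <= 0 -> 0 < x -> x <= y -> y `^ e <= x `^ e.
Proof.
move=> e_le0 x_gt0 xy; have y_gt0 := lt_le_trans x_gt0 xy.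
have powR_inv z : z `^ e = (z `^ (- e))^-1 by rewrite -powRN opprK.
rewrite !powR_inv lef_pV2 ?posrE ?powR_gt0//.
by apply: ge0_ler_powR; rewrite ?oppr_ge0 ?nnegrE// ltW.
Qed.

Section lebesgue_stieltjes_measure_itvNy.
Context (R : realType) (F : cumulative R R) (mu : {measure set R -> \bar R}).
Hypothesis muE : forall x, mu `]-oo, x]%classic = (F x)%:E.

(* [lebesgue_stieltjes_measure F] is a measure on [measurableTypeR R], which has
   the same measurable sets as [R] but is a different measurable type. *)
Let muR : set (measurableTypeR R) -> \bar R := mu.
Let muR0 : muR set0 = 0%E. Proof. exact: measure0. Qed.
Let muR_ge0 A : (0 <= muR A)%E. Proof. exact: measure_ge0. Qed.
Let muR_sigma_additive : semi_sigma_additive muR.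
Proof. exact: (@measure_semi_sigma_additive _ _ _ mu). Qed.
HB.instance Definition _ :=
  isMeasure.Build _ _ _ muR muR0 muR_ge0 muR_sigma_additive.

Lemma lebesgue_stieltjes_measure_itvNy A :
  measurable A -> lebesgue_stieltjes_measure F A = mu A.
Proof.
move=> mA; rewrite -/(muR A).
apply: lebesgue_stieltjes_measure_unique => [_ [[a b]]/= _ <- | //].
rewrite /lebesgue_stieltjes_measure /measure_extension/=.
rewrite measurable_mu_extE/=; last exact: is_ocitv.
have [ab | ba] := leP a b; last first.
  by rewrite set_itv_ge ?wlength0 ?measure0// bnd_simp -leNgt ltW.
rewrite wlength_itv_bnd// EFinB -!muE.
have -> : `]a, b]%classic = `]-oo, b] `\` `]-oo, a].
  by rewrite -[RHS]setCK setCD setCitvl setUC -[LHS]setCK setCitv.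
rewrite measureD ?setIidr//; first exact: subset_itvl.
by change (mu `]-oo, b]%classic < +oo)%E; rewrite muE ltry.
Qed.

End lebesgue_stieltjes_measure_itvNy.

Section cumulativeBounded_range.
Context (R : realType) (l r : R) (F : cumulativeBounded l r).

Lemma cumulativeBounded_ge x : l <= F x.
Proof.
rewrite -[leLHS](cvg_lim _ (cumulativeNy F))//.
apply: limr_le; first exact: cvgP (cumulativeNy F).
near=> y; apply: cumulative_is_nondecreasing; near: y; exact: nbhs_ninfty_le.
Unshelve. all: by end_near. Qed.

Lemma cumulativeBounded_le x : F x <= r.
Proof.
rewrite -[leRHS](cvg_lim _ (cumulativey F))//.
apply: limr_ge; first exact: cvgP (cumulativey F).
near=> y; apply: cumulative_is_nondecreasing; near: y; exact: nbhs_pinfty_ge.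
Unshelve. all: by end_near. Qed.

End cumulativeBounded_range.

Section quantile_function.
Context (R : realType) (F : cumulativeBounded (0:R) (1:R)).
Local Notation Q := (qinv F).
Local Notation U := (`]0, 1[%classic : set R).

Lemma qinv_le u x : 0 < u < 1 -> (Q u <= x) = (u <= F x).
Proof.
case/andP => u_gt0 u_lt1; set S := [set x | u <= F x].
have S_ne : nonempty S.
  by have [y /ltW uFy] := filter_ex (cvgr_gt _ (cumulativey F) _ u_lt1); exists y.
have S_lb y : F y < u -> lbound S y.
  move=> Fy_lt z /= uFz; rewrite leNgt; apply/negP => zy.
  have := lt_le_trans Fy_lt uFz.
  by rewrite ltNge cumulative_is_nondecreasing// ltW.
apply/idP/idP => [Qux|uFx]; last first.
  have [y Fy_lt] := filter_ex (cvgr_lt _ (cumulativeNy F) _ u_gt0).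
  by apply: ge_inf => //; exists y; exact: S_lb.
rewrite leNgt; apply/negP => Fx_lt.
have [y [xy Fy_lt]] : exists y, x < y /\ F y < u.
  apply: (@filter_ex _ (x^'+)); near=> y; split; near: y.
    exact: nbhs_right_gt.
  exact: (cvgr_lt _ (cumulative_is_right_continuous F x) _ Fx_lt).
have : y <= Q u by apply: lb_le_inf => //; exact: S_lb.
by move=> /le_trans /(_ Qux); rewrite leNgt xy.
Unshelve. all: by end_near.
Qed.

Lemma qinv_ge0 u : (forall x, x < 0 -> F x = 0) -> 0 < u < 1 -> 0 <= Q u.
Proof.
move=> F_lt0 u01; rewrite leNgt; apply/negP => Qu_lt0.
have := lexx (Q u); rewrite qinv_le// F_lt0// leNgt.
by case/andP: u01 => ->.
Qed.

Lemma qinv_nondecreasing u v : 0 < u < 1 -> 0 < v < 1 -> u <= v -> Q u <= Q v.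
Proof. by move=> u01 v01 uv; rewrite qinv_le// (le_trans uv)// -qinv_le. Qed.

Lemma measurable_qinv : measurable_fun U Q.
Proof.
apply: (measurability (@RGenCInfty.G R)) => [|/= _ [_ [r ->] <-]].
  exact: RGenCInfty.measurableE.
apply: is_interval_measurable => s t [Us Qs] [Ut Qt] v /andP[sv vt].
have Uv : U v.
  move: Us Ut; rewrite /= !in_itv/= => /andP[s_gt0 _] /andP[_ t_lt1].
  by rewrite (lt_le_trans s_gt0 sv) (le_lt_trans vt t_lt1).
split => //; move: Qs; rewrite /= !in_itv/= !andbT => /le_trans; apply.
by apply: qinv_nondecreasing => //; move: Us Uv; rewrite /= !in_itv.
Qed.

(* For u outside ]0,1[ the set {x | u <= F x} may be empty or unbounded
   below, so that [qinv F u] is a junk value; [qinv F] is only used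
   restricted to ]0,1[. *)
Lemma measurable_qinv_restrict : measurable_fun setT (Q \_ U).
Proof.
by apply/(measurable_restrictT _ (measurable_itv _)); exact: measurable_qinv.
Qed.

Lemma lebesgue_qinv_itvNy x :
  lebesgue_measure ((Q \_ U) @^-1` `]-oo, x] `&` U) = (F x)%:E.
Proof.
have -> : (Q \_ U) @^-1` `]-oo, x] `&` U = [set u | u <= F x] `&` U.
  apply/seteqP; split => u [/= + Uu];
    by rewrite patchE mem_set//= in_itv/= qinv_le//; move: Uu; rewrite /= in_itv.
have [Fx1|Fx_lt1] := eqVneq (F x) 1.
  rewrite Fx1 setIidr ?lebesgue_measure_itv/= ?lte01 ?EFinN ?sube0//.
  by move=> u; rewrite /= in_itv/= => /andP[_ /ltW].
rewrite (_ : _ `&` _ = `]0, F x]%classic); last first.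
  have Fx_lt : F x < 1 by rewrite lt_neqAle Fx_lt1 cumulativeBounded_le.
  apply/seteqP; split => u /=; rewrite !in_itv/=; first by case=> -> /andP[->].
  by case/andP => u_gt0 uFx; rewrite uFx u_gt0 (le_lt_trans uFx).
rewrite lebesgue_measure_itv/= lte_fin.
case: ifPn => [_|]; first by rewrite EFinN sube0.
rewrite -leNgt => Fx_le0; congr (_%:E); apply/eqP.
by rewrite eq_le Fx_le0 cumulativeBounded_ge.
Qed.

Lemma lebesgue_stieltjes_measure_qinv A : measurable A ->
  lebesgue_stieltjes_measure F A = lebesgue_measure ((Q \_ U) @^-1` A `&` U).
Proof.
have mU : measurable U by exact: measurable_itv.
apply: (lebesgue_stieltjes_measure_itvNy
  (mu := pushforward (mrestr lebesgue_measure mU) (Q \_ U))).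
- exact: measurable_qinv_restrict.
- by move=> mQ; exact: lebesgue_qinv_itvNy.
Qed.

End quantile_function.

Lemma int_pow_ge0 (R : realType) (f : R -> R) (a : R) : (0 <= int_pow f a)%E.
Proof. by apply: integral_ge0 => x _; rewrite lee_fin powR_ge0. Qed.

Lemma int_pow_fin_num (R : realType) (f : R -> R) (a : R) :
  (int_pow f a < +oo)%E -> int_pow f a \is a fin_num.
Proof. by move=> f_fin; rewrite ge0_fin_numE ?int_pow_ge0. Qed.

Section quantile_transform.
Context d (T : measurableType d) (R : realType) (P : probability T R)
  (X : {RV P >-> R}) (f : R -> R).
Hypotheses (X_ge0 : forall w, 0 <= X w) (pdf : is_pdf X f).

Local Notation U := (`]0, 1[%classic : set R).
Local Notation Q := (qinv (cdfR X)).

Let mU : measurable (U : set (measurableTypeR R)).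
Proof. exact: measurable_itv. Qed.
Let mf : measurable_fun setT f. Proof. by case: pdf. Qed.
Let f_ge0 x : 0 <= f x. Proof. by case: pdf. Qed.
Let distributionE A : measurable A ->
  distribution P X A = (\int[lebesgue_measure]_(x in A) (f x)%:E)%E.
Proof. by case: pdf => _ _; apply. Qed.

Let cdfRE x : (cdfR X x)%:E = cdf X x.
Proof. by rewrite /cdfR fineK// fin_num_measure. Qed.

Let cdfR_nondecreasing : nondecreasing_fun (cdfR X).
Proof. by move=> x y xy; rewrite -lee_fin !cdfRE cdf_nondecreasing. Qed.

Let cdfR_right_continuous x : cdfR X y @[y --> x^'+] --> cdfR X x.
Proof. by apply: fine_cvg; rewrite cdfRE; exact: cdf_right_continuous. Qed.

HB.instance Definition _ := isCumulative.Build R _ R (cdfR X)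
  cdfR_nondecreasing cdfR_right_continuous.

Let cdfR_Ny0 : cdfR X @ -oo --> (0:R). Proof. exact/fine_cvg/cvg_cdfNy0. Qed.
Let cdfR_y1 : cdfR X @ +oo --> (1:R). Proof. exact/fine_cvg/cvg_cdfy1. Qed.

HB.instance Definition _ := isCumulativeBounded.Build R 0 1 (cdfR X)
  cdfR_Ny0 cdfR_y1.

Let cdfR_lt0 x : x < 0 -> cdfR X x = 0.
Proof.
move=> x_lt0; apply/EFin_inj; rewrite cdfRE /cdf /distribution /pushforward.
rewrite [S in P S](_ : _ = set0) ?measure0// -subset0 => w /=; rewrite in_itv/=.
move=> Xw_le; have := le_lt_trans (X_ge0 w) (le_lt_trans Xw_le x_lt0).
by rewrite ltxx.
Qed.

Lemma distribution_qinv A : measurable A ->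
  distribution P X A = lebesgue_measure ((Q \_ U) @^-1` A `&` U).
Proof.
move=> mA; rewrite -lebesgue_stieltjes_measure_qinv//.
by apply/esym/lebesgue_stieltjes_measure_itvNy => // x; rewrite cdfRE.
Qed.

Lemma ge0_integral_distribution_pdf (h : R -> \bar R) :
  (forall x, 0 <= h x)%E -> measurable_fun setT h ->
  (\int[distribution P X]_x h x = \int[lebesgue_measure]_x (h x * (f x)%:E))%E.
Proof.
move=> h_ge0 mh.
have pdfE A : measurable A -> distribution P X A =
    (\int[lebesgue_measure]_(x in setT) (\1_A x * f x)%:E)%E.
  move=> mA; rewrite distributionE// integral_mkcond; apply: eq_integral => x _.
  by rewrite patchE indicE; case: (x \in A); rewrite /= ?mul1r ?mul0r.
have mid : measurable_fun (setT : set (measurableTypeR R)) (idfun : R -> R).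
  by move=> _ B mB; rewrite setTI.
have mf' : measurable_fun (setT : set (measurableTypeR R)) f.
  by move=> _ B mB; exact: mf.
exact: (ge0_integral_weighted_image measurableT mid mf' f_ge0 pdfE).
Qed.

Lemma ge0_integral_distribution_qinv (h : R -> \bar R) :
  (forall x, 0 <= h x)%E -> measurable_fun setT h ->
  (\int[distribution P X]_x h x = \int[lebesgue_measure]_(u in U) h (Q u))%E.
Proof.
move=> h_ge0 mh.
have mQ : measurable_fun (U : set (measurableTypeR R)) (Q \_ U).
  by apply: measurable_funTS; exact: measurable_qinv_restrict.
have qE A : measurable A -> distribution P X A =
    (\int[lebesgue_measure]_(u in U) (\1_A ((Q \_ U) u) * cst 1 u)%:E)%E.
  move=> mA; rewrite distribution_qinv// -integral_indic//; last first.
    by rewrite -[S in measurable S]setTI; exact: measurable_qinv_restrict.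
  by apply: eq_integral => u _; rewrite mulr1.
rewrite (ge0_integral_weighted_image mU mQ (measurable_cst _) (fun=> ler01) qE
  h_ge0 mh).
by apply: eq_integral => u /[!inE] Uu; rewrite patchE mem_set// mule1.
Qed.

Let measurable_Q : measurable_fun U Q. Proof. exact: measurable_qinv. Qed.

Lemma measurable_pdf_qinv p :
  measurable_fun U (fun u => ((f (Q u)) `^ p)%:E).
Proof.
apply/measurable_EFinP/(measurableT_comp (measurable_powR _)).
exact: (measurableT_comp mf measurable_Q).
Qed.

Lemma int_pow_qinv a : 0 < a ->
  int_pow f a = (\int[lebesgue_measure]_(u in U) ((f (Q u)) `^ (a - 1))%:E)%E.
Proof.
move=> a_gt0; pose g := (fun x => f x `^ (a - 1)) \_ `[0, +oo[%classic.
have mg : measurable_fun setT g.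
  apply/(measurable_restrictT _ (measurable_itv _))/measurable_funTS.
  exact: (measurableT_comp (measurable_powR _) mf).
have g_ge0 x : 0 <= g x by rewrite /g patchE; case: ifPn => // _; exact: powR_ge0.
transitivity (\int[distribution P X]_x (g x)%:E)%E.
  rewrite ge0_integral_distribution_pdf//; last exact/measurable_EFinP.
  rewrite /int_pow [LHS]integral_mkcond; apply: eq_integral => x _.
  rewrite /g !patchE; case: ifPn => _ /=; last by rewrite mul0e.
  by rewrite -EFinM mulrC mulr_powRB1.
rewrite ge0_integral_distribution_qinv//; last exact/measurable_EFinP.
apply: eq_integral => u /[!inE] Uu; rewrite /g patchE mem_set//= in_itv/= andbT.
by apply: qinv_ge0 => //; move: Uu; rewrite /= in_itv.
Qed.

Lemma int_pow_gt0 a : 0 < a -> (0 < int_pow f a)%E.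
Proof.
move=> a_gt0; rewrite lt0e int_pow_ge0 andbT; apply/negP => /eqP int_pow0.
pose D := `[0, +oo[%classic : set R.
have mD : measurable D by exact: measurable_itv.
have f_ae0 : ae_eq lebesgue_measure D (fun x => (f x)%:E) (cst 0%E).
  have mfa : measurable_fun D (fun x => ((f x) `^ a)%:E).
    apply/measurable_EFinP/measurable_funTS.
    exact: (measurableT_comp (measurable_powR _) mf).
  have := (ae_eq_integral_abs lebesgue_measure mD mfa).1.
  under eq_integral do rewrite gee0_abs ?lee_fin ?powR_ge0//.
  move=> /(_ int_pow0); apply: filterS => x fa0 Dx /=.
  by rewrite (powR_eq0_eq0 (EFin_inj (fa0 Dx))).
have : distribution P X D = 0%E.
  rewrite distributionE// -(integral0 lebesgue_measure D).
  by apply: ae_eq_integral => //; exact/measurable_EFinP/measurable_funTS.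
rewrite /distribution /pushforward (_ : X @^-1` D = setT) ?probability_setT.
  by move/eqP; rewrite onee_eq0.
by apply/seteqP; split => // w _; rewrite /D /= in_itv/= andbT X_ge0.
Qed.

Lemma fine_int_pow_gt0 a :
  0 < a -> (int_pow f a < +oo)%E -> 0 < fine (int_pow f a).
Proof. by move=> a_gt0 fin; apply: fine_gt0; rewrite int_pow_gt0. Qed.

Lemma pdf_qinv_neq0_ae :
  {ae lebesgue_measure, forall u, U u -> f (Q u) != 0}.
Proof.
have mf0 : measurable (f @^-1` [set 0]).
  by rewrite -[S in measurable S]setTI; exact: mf.
exists ((Q \_ U) @^-1` (f @^-1` [set 0]) `&` U); split.
- apply: measurableI; last exact: measurable_itv.
  by rewrite -[S in measurable S]setTI; exact: measurable_qinv_restrict.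
- by rewrite -distribution_qinv// distributionE//; apply: integral0_eq => x /= ->.
- move=> u /= /not_implyP[Uu /negP]; rewrite negbK => /eqP fQu0.
  by split=> //=; rewrite patchE mem_set.
Qed.

End quantile_transform.

Section dispersive_order.
Context d (T : measurableType d) (R : realType) (P : probability T R)
  (X Y : {RV P >-> R}) (f g : R -> R) (a : R).
Hypotheses (X_ge0 : forall w, 0 <= X w) (Y_ge0 : forall w, 0 <= Y w).
Hypotheses (pdfX : is_pdf X f) (pdfY : is_pdf Y g) (disp : disp_le X Y f g).

Lemma int_pow_le_disp_gt1 : 1 < a -> (int_pow g a <= int_pow f a)%E.
Proof.
move=> a_gt1; have a_gt0 := lt_trans ltr01 a_gt1.
rewrite (int_pow_qinv Y_ge0 pdfY a_gt0) (int_pow_qinv X_ge0 pdfX a_gt0).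
apply: ge0_le_integral => //.
- by move=> u _; rewrite lee_fin powR_ge0.
- exact: measurable_pdf_qinv.
- exact: measurable_pdf_qinv.
move=> u; rewrite /= in_itv/= => u01; rewrite lee_fin.
case: pdfX => _ f_ge0 _; case: pdfY => _ g_ge0 _.
apply: ge0_ler_powR; [by rewrite subr_ge0 ltW|by rewrite nnegrE..|exact: disp].
Qed.

Lemma int_pow_le_disp_lt1 : 0 < a -> a < 1 -> (int_pow f a <= int_pow g a)%E.
Proof.
move=> a_gt0 a_lt1.
rewrite (int_pow_qinv Y_ge0 pdfY a_gt0) (int_pow_qinv X_ge0 pdfX a_gt0).
apply: ae_ge0_le_integral => //.
- by move=> u _; rewrite lee_fin powR_ge0.
- exact: measurable_pdf_qinv.
- by move=> u _; rewrite lee_fin powR_ge0.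
- exact: measurable_pdf_qinv.
(* The exponent [a - 1] is negative, so the pointwise comparison of the
   integrands needs [g (G^-1 u) > 0], which fails only on a null set. *)
apply: filterS (pdf_qinv_neq0_ae pdfY) => [|u gQu_neq0 Uu].
  exact: (ae_filter_ringOfSetsType lebesgue_measure).
case: pdfY => _ g_ge0 _; rewrite lee_fin; apply: le0_ger_powR.
- by rewrite subr_le0 ltW.
- by rewrite lt0r (gQu_neq0 Uu) g_ge0.
- by move: Uu; rewrite /= in_itv/=; exact: disp.
Qed.

End dispersive_order.

Lemma renyi_factor_le (R : realType) (a b x y : R) :
  a != 1 -> 0 < x -> 0 < y -> (a < 1 -> x <= y) -> (1 < a -> y <= x) ->
  (1 <= b -> (1 - a)^-1 * x `^ (b - 1) <= (1 - a)^-1 * y `^ (b - 1)) /\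
  (b < 1 -> (1 - a)^-1 * y `^ (b - 1) <= (1 - a)^-1 * x `^ (b - 1)).
Proof.
move=> a_neq1 x_gt0 y_gt0 xy yx.
have [a_lt1|a_gt1|a_eq1] := ltgtP a 1; last by rewrite a_eq1 eqxx in a_neq1.
- have c_ge0 : 0 <= (1 - a)^-1 by rewrite invr_ge0 subr_ge0 ltW.
  split=> b_cmp; apply: (ler_wpM2l c_ge0).
    apply: ge0_ler_powR; [by rewrite subr_ge0|by rewrite nnegrE ltW..|exact: xy].
  by apply: le0_ger_powR; [rewrite subr_le0 ltW|by []|exact: xy].
- have c_le0 : (1 - a)^-1 <= 0 by rewrite invr_le0 subr_le0 ltW.
  split=> b_cmp; apply: (ler_wnM2l c_le0).
    apply: ge0_ler_powR; [by rewrite subr_ge0|by rewrite nnegrE ltW..|exact: yx].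
  by apply: le0_ger_powR; [rewrite subr_le0 ltW|by []|exact: yx].
Qed.

Theorem proposition2p5 (d : measure_display) (T : measurableType d)
  (R : realType) (P : probability T R) (X Y : {RV P >-> R}) (f g : R -> R)
  (a b : R) :
  (forall w, 0 <= X w) -> (forall w, 0 <= Y w) ->
  is_pdf X f -> is_pdf Y g ->
  0 < a -> a != 1 -> 0 < b ->
  (int_pow f a < +oo)%E -> (int_pow g a < +oo)%E ->
  disp_le X Y f g ->
  (((a < 1 /\ 1 <= b) \/ (1 < a /\ 1 <= b)) ->
     renyi_igf f a b <= renyi_igf g a b) /\
  (((a < 1 /\ b < 1) \/ (1 < a /\ b < 1)) ->
     renyi_igf g a b <= renyi_igf f a b).
Proof.
move=> X_ge0 Y_ge0 pdfX pdfY a_gt0 a_neq1 _ f_fin g_fin disp.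
have [f_fin_num g_fin_num] := (int_pow_fin_num f_fin, int_pow_fin_num g_fin).
have := renyi_factor_le b a_neq1
  (fine_int_pow_gt0 X_ge0 pdfX a_gt0 f_fin)
  (fine_int_pow_gt0 Y_ge0 pdfY a_gt0 g_fin)
  (fun a_lt1 => fine_le f_fin_num g_fin_num
     (int_pow_le_disp_lt1 X_ge0 Y_ge0 pdfX pdfY disp a_gt0 a_lt1))
  (fun a_gt1 => fine_le g_fin_num f_fin_num
     (int_pow_le_disp_gt1 X_ge0 Y_ge0 pdfX pdfY disp a_gt1)).
rewrite /renyi_igf => -[igf_le igf_ge].
by split=> [[] [_ /igf_le]|[] [_ /igf_ge]].
Qed.
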